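(* There exists an infinite $7/3$-power-free word over $\{0,1\}$ that contains a square beginning at every position.
   Context: A finite word $w$ is an $\alpha$-power ($\alpha$ rational) if $w = x^n x'$ with $x$ nonempty, $x'$ a prefix of $x$, and $\alpha = n + |x'|/|x|$. A word is $\alpha$-power-free if none of its factors (contiguous subwords) is an $\alpha$-power. A square is a word $xx$ with $x$ nonempty. *)

From mathcomp Require Import all_boot.
Set Implicit Arguments. Unset Strict Implicit. Unset Printing Implicit Defensive.

(* An infinite word over {0,1} is a function nat -> bool (false = 0, true = 1). *)
Definition infword := nat -> bool.

Definition factor (w : infword) (i len : nat) : seq bool := mkseq (fun k => w (i + k)) len.

Definition seqpow (T : Type) (x : seq T) (n : nat) : seq T := flatten (nseq n x).

(* u is an (a/b)-power: u = x^n x' with x nonempty, x' a prefix of x, and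
   a/b = n + |x'|/|x|, i.e. b * (n*|x| + |x'|) = a * |x|. *)
Definition is_frac_power (a b : nat) (u : seq bool) : Prop :=
  exists (x x' : seq bool) (n : nat),
    [/\ 0 < size x, prefix x' x, u = seqpow x n ++ x' &
        b * (n * size x + size x') = a * size x].

Definition frac_power_free (a b : nat) (w : infword) : Prop :=
  forall i len, ~ is_frac_power a b (factor w i len).

Definition square_at (w : infword) (i : nat) : Prop :=
  exists x : seq bool, 0 < size x /\ factor w i (2 * size x) = x ++ x.

From mathcomp Require Import all_boot zify.

Set Implicit Arguments. Unset Strict Implicit. Unset Printing Implicit Defensive.

(* The word is v = 0 mu^2(v), where mu is the Thue-Morse morphism 0 -> 01,
   1 -> 10.  A factor of mu(X) with an odd period p and length > 2p is ruled
   out as soon as X has no three equal consecutive letters, while an even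
   period 2q of a factor of length L descends to the period q of a factor of
   X of length ceil(L/2).  Going down mu^2 thus divides the period by 4 and
   the length by at most 4 (losing one letter at the start of v), which keeps
   the exponent above 7/3; a strong induction on the period leaves only
   periods 1, 2, 3 in the prefix, checked by computation.  Squares come from
   the same self-similarity: mu^2 turns a square of period P followed by one
   more letter into a square of period 4P followed by four more letters, and
   the extra letter absorbs the rounding when position i of v is traced back
   to position (i - 1) / 4. *)

Definition tm (X : infword) : infword := fun n => odd n (+) X (n %/ 2).

Definition no_run3 (X : infword) : Prop :=
  forall i, ~ (X i = X i.+1 /\ X i.+1 = X i.+2).

Definition period_on (w : infword) (s L p : nat) : Prop :=
  forall t, s <= t -> t + p < s + L -> w t = w (t + p).

Lemma tm_even X m : tm X (2 * m) = X m.
Proof. by rewrite /tm mul2n odd_double -mul2n (_ : 2 * m %/ 2 = m) //; lia. Qed.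

Lemma tm_odd X m : tm X (2 * m).+1 = ~~ X m.
Proof.
by rewrite /tm /= mul2n odd_double -mul2n (_ : (2 * m).+1 %/ 2 = m) //; lia.
Qed.

Lemma tm_pair_neq X n : ~~ odd n -> tm X n != tm X n.+1.
Proof.
move=> ev; rewrite (_ : n = 2 * n./2); last by rewrite mul2n even_halfK.
by rewrite tm_even tm_odd; case: (X _).
Qed.

Lemma tm_no_run3 X : no_run3 (tm X).
Proof.
move=> i [h1 h2]; have [ev|od] := boolP (odd i).
- move: h2; rewrite (_ : i.+1 = 2 * i./2.+1) ?tm_even ?tm_odd; last by lia.
  by case: (X _).
- move: h1; rewrite (_ : i = 2 * i./2) ?tm_even ?tm_odd; last by lia.
  by case: (X _).
Qed.

Lemma tm_not_alternating X j : no_run3 X ->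
  ~ (forall k, k < 4 -> tm X (j + k) != tm X (j + k).+1).
Proof.
move=> hX alt; set m := j %/ 2.
have step i : (tm X (2 * i).+1 != tm X (2 * i).+2) = (X i == X i.+1).
  rewrite (_ : (2 * i).+2 = 2 * i.+1) ?tm_odd ?tm_even; last by lia.
  by case: (X i); case: (X i.+1).
have [e|e] : j = 2 * m \/ j = (2 * m).+1 by rewrite /m; lia.
- have e1 : j + 1 = (2 * m).+1 by lia.
  have e3 : j + 3 = (2 * m.+1).+1 by lia.
  move: (alt 1 isT) (alt 3 isT); rewrite e1 e3 !step.
  by move=> /eqP h1 /eqP h2; apply: (hX m).
- have e0 : j + 0 = (2 * m).+1 by lia.
  have e2 : j + 2 = (2 * m.+1).+1 by lia.
  move: (alt 0 isT) (alt 2 isT); rewrite e0 e2 !step.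
  by move=> /eqP h1 /eqP h2; apply: (hX m).
Qed.

(* Every difference between consecutive letters at [s + k] is transported by
   the period to a pair [2m, 2m+1], which always differs in [tm X]. *)
Lemma tm_odd_period X s L p : no_run3 X -> period_on (tm X) s L p ->
  odd p -> 2 * p < L -> False.
Proof.
move=> hX hper op hL; have [p1|p3] : p = 1 \/ 3 <= p by lia.
  subst p; apply: (tm_no_run3 (i := s)).
  by split; [rewrite -[s.+1]addn1 | rewrite -[s.+2]addn1]; apply: hper; lia.
apply: (tm_not_alternating (j := s) hX) => k hk.
have [ev|od] := boolP (~~ odd (s + k)); first exact: tm_pair_neq.
have [fwd|bwd] : k + 1 + p < L \/ p <= k by lia.
- have -> : tm X (s + k) = tm X (s + k + p) by apply: hper; lia.
  have -> : tm X (s + k).+1 = tm X (s + k + p).+1.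
    by rewrite -addSn; apply: hper; lia.
  by apply: tm_pair_neq; rewrite oddD op; case: odd od.
- have e : s + k = s + k - p + p by lia.
  have -> : tm X (s + k) = tm X (s + k - p).
    by rewrite {1}e; symmetry; apply: hper; lia.
  have -> : tm X (s + k).+1 = tm X (s + k - p).+1.
    by rewrite {1}e -addSn; symmetry; apply: hper; lia.
  by apply: tm_pair_neq; rewrite oddB ?op; [case: odd od | lia].
Qed.

Lemma tm_period_half X s L p : no_run3 X -> period_on (tm X) s L p ->
  2 * p < L ->
  exists2 q, p = 2 * q & period_on X (s %/ 2) (L.+1 %/ 2) q.
Proof.
move=> hX hper hL; have [op|ep] := boolP (odd p).
  by case: (tm_odd_period hX hper op hL).
have [q ?] : exists q, p = 2 * q by exists p./2; lia.
subst p.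
exists q => // i hi1 hi2; have [ge|eq] : s <= 2 * i \/ s = (2 * i).+1 by lia.
- have := hper (2 * i) ge; rewrite -mulnDr !tm_even; apply; lia.
- have := hper (2 * i).+1; rewrite addSn -mulnDr !tm_odd.
  by move/(_ _ _)/negb_inj; apply; lia.
Qed.

Fixpoint v_iter (n : nat) : infword := fun k =>
  if n is n'.+1 then (if k is k'.+1 then tm (tm (v_iter n')) k' else false)
  else false.

Definition v : infword := fun k => v_iter k k.

Lemma v_iterE m n k : k <= m -> k <= n -> v_iter m k = v_iter n k.
Proof.
elim: m n k => [|m IH] [|n] [|k] //= km kn; try lia.
by rewrite /tm (IH n); lia.
Qed.

Lemma v_succ k : v k.+1 = tm (tm v) k.
Proof. by rewrite /v /= /tm (@v_iterE k (k %/ 2 %/ 2)); lia. Qed.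

Lemma no_run3_v : no_run3 v.
Proof. by case=> [|k]; [case | rewrite !v_succ; apply: tm_no_run3]. Qed.

Lemma period_on_v_succ s L p :
  period_on v s L p -> period_on (tm (tm v)) s.-1 (L - (s == 0)) p.
Proof.
move=> hper t ht1 ht2; rewrite -!v_succ -addSn.
by apply: hper; case: s ht1 ht2 => /= [|s]; lia.
Qed.

Lemma v_period_free p s L : 0 < p -> 7 * p <= 3 * L -> ~ period_on v s L p.
Proof.
elim/ltn_ind: p s L => p IH s L hp hL hper.
have [[s0 p3]|big] : s = 0 /\ p <= 3 \/ 0 < s \/ 4 <= p by lia.
  subst s; have [t tL] : exists2 t, t + p < L & v t != v (t + p).
    by case: p p3 hp hL {IH hper} => [|[|[|[|]]]] // _ _ hL;
      [exists 1 | exists 0 | exists 0]; rewrite //; lia.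
  by rewrite hper ?eqxx //; lia.
have [q ? hq] := tm_period_half (@tm_no_run3 v) (period_on_v_succ hper)
  ltac:(case: s big {hper}; lia).
subst p; have [r ? hr] := tm_period_half no_run3_v hq
  ltac:(case: s big {hper hq}; lia).
by subst q; apply: IH hr; case: s big {hper hq}; lia.
Qed.

Lemma tm_period X s L p :
  period_on X s L p -> period_on (tm X) (2 * s) (2 * L) (2 * p).
Proof.
move=> hper t ht1 ht2; rewrite /tm (_ : (t + 2 * p) %/ 2 = t %/ 2 + p); last by lia.
by rewrite oddD oddM addbF hper //; lia.
Qed.

Lemma v_square_period i : exists2 P, 0 < P & period_on v i (2 * P).+1 P.
Proof.
elim/ltn_ind: i => -[_|k IH].
  by exists 4 => // -[|[|[|[|[|t]]]]] // _; rewrite add0n addnC; lia.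
have [P P0 hper] := IH (k %/ 4) ltac:(lia).
exists (2 * (2 * P)); first by lia.
have /tm_period/tm_period h4 := hper.
move=> t ht1 ht2; have -> : t = t.-1.+1 by lia.
by rewrite addSn !v_succ; apply: h4; lia.
Qed.

Lemma square_at_period w i L P :
  0 < P -> 2 * P <= L -> period_on w i L P -> square_at w i.
Proof.
move=> P0 PL hper; exists (factor w i P); rewrite /factor size_mkseq.
split=> //; apply: (@eq_from_nth _ false) => [|t].
  by rewrite size_cat !size_mkseq; lia.
rewrite size_mkseq => ht; rewrite nth_cat size_mkseq nth_mkseq //.
case: ltnP => [tP|Pt]; first by rewrite nth_mkseq.
rewrite nth_mkseq; last by lia.
rewrite (_ : i + t = i + (t - P) + P); last by lia.
by symmetry; apply: hper; lia.
Qed.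

Lemma size_seqpow T (x : seq T) n : size (seqpow x n) = n * size x.
Proof. by elim: n => //= n IH; rewrite size_cat -/(seqpow x n) IH mulSn. Qed.

Lemma nth_seqpow_prefix (x x' : seq bool) n k : prefix x' x ->
  k < size (seqpow x n ++ x') ->
  nth false (seqpow x n ++ x') k = nth false x (k %% size x).
Proof.
move=> hpre; have hx' : size x' <= size x := size_prefix hpre.
elim: n k => [|n IH] k; rewrite size_cat size_seqpow => hk.
- have kx' : k < size x' by lia.
  have kx : k < size x by lia.
  move: hpre; rewrite prefixE => /eqP <-.
  by rewrite /= nth_take // modn_small.
- rewrite /seqpow /= -catA nth_cat -/(seqpow x n).
  case: ltnP => [kx|xk]; first by rewrite modn_small.
  rewrite IH; last by rewrite size_cat size_seqpow; lia.
  by rewrite -(modnDr (k - size x)) subnK.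
Qed.

Lemma frac_power_period a b w i L : is_frac_power a b (factor w i L) ->
  exists2 p, 0 < p & b * L = a * p /\ period_on w i L p.
Proof.
move=> [x [x' [n [x0 hpre hfac hab]]]].
have hL : L = n * size x + size x'.
  by rewrite -(size_mkseq (fun k => w (i + k)) L) -/(factor w i L) hfac
    size_cat size_seqpow.
exists (size x) => //; split; first by rewrite hL.
have letter k : k < L -> w (i + k) = nth false x (k %% size x).
  move=> kL; rewrite -(nth_mkseq false (fun k => w (i + k)) kL).
  rewrite -/(factor w i L) hfac nth_seqpow_prefix //.
  by rewrite size_cat size_seqpow -hL.
move=> t ht1 ht2; have -> : t = i + (t - i) by lia.
by rewrite -addnA !letter ?modnDr //; lia.
Qed.

Theorem theorem6 :
  exists w : infword, frac_power_free 7 3 w /\ forall i : nat, square_at w i.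
Proof.
exists v; split.
- move=> i L /frac_power_period [p p0 [hpL hper]].
  by apply: (v_period_free p0 _ hper); lia.
- move=> i; have [P P0 hper] := v_square_period i.
  exact: (square_at_period P0 _ hper).
Qed.
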